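(* Fix $n\geq 2$, $k\geq 1$, and let $K=J(2k+1,2m)$ with $|m|\geq 2$. Let $\phi_K(x,y)$ be the Riley polynomial of $K$ with respect to the presentation $\pi_1(S^3\setminus K)=\langle a,b\mid w^ma=bw^m\rangle$, $w=(ba^{-1})^kba(b^{-1}a)^k$. Then $\phi_K(2\cos(\pi/n),y)$ has a real root $y_n>2$ in the following cases: (1) $n\geq 3$ when $m\leq -3$; (2) $n\geq 4$ when $m=-2$; (3) $n\geq 5$ when $m=2$; (4) $n\geq 4$ when $m=3$; (5) $n\geq 3$ when $m\geq 4$.
   Context: $J(2k+1,2m)$ is the double twist knot (two-bridge knot with twist regions of $2k+1$ and $2m$ signed half-twists), whose group has the stated presentation with $a,b$ meridians. Riley polynomial: with $A=\begin{bmatrix}s&1\\0&s^{-1}\end{bmatrix}$, $B=\begin{bmatrix}s&0\\2-y&s^{-1}\end{bmatrix}$ and $V$ the word $w^m$ evaluated at $A,B$, the $(1,2)$-entry of $VA-BV$ equals $f(s+s^{-1},y)$ for some $f\in\mathbb{Z}[x,y]$, and $\phi_K:=f$. Explicitly, with Chebyshev polynomials $S_{-1}=0$, $S_0=1$, $S_1=z$, $S_{n+1}=zS_n-S_{n-1}$, $\lambda=x^2-y-(y-2)(y+2-x^2)S_k(y)S_{k-1}(y)$, $\alpha=1+(y+2-x^2)S_{k-1}(y)(S_k(y)-S_{k-1}(y))$: $\phi_K=S_{m-1}(\lambda)\alpha-S_{m-2}(\lambda)$ for $m\geq 1$ and $\phi_K=S_{|m|}(\lambda)-S_{|m|-1}(\lambda)\alpha$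 for $m\leq-1$. *)

From Stdlib Require Import Reals ZArith.
Open Scope R_scope.

(* Chebyshev-type polynomials S_{-1}=0, S_0=1, S_{j+1} = z S_j - S_{j-1}.
   cheb_pair j z = (S_{j-1}(z), S_j(z)) for j : nat. *)
Fixpoint cheb_pair (j : nat) (z : R) : R * R :=
  match j with
  | O => (0, 1)
  | Datatypes.S j' => let (a, b) := cheb_pair j' z in (b, z * b - a)
  end.

Definition Cheb (j : nat) (z : R) : R := snd (cheb_pair j z).
Definition Cheb_pred (j : nat) (z : R) : R := fst (cheb_pair j z).

Definition riley_lambda (k : nat) (x y : R) : R :=
  x ^ 2 - y - (y - 2) * (y + 2 - x ^ 2) * Cheb k y * Cheb_pred k y.

Definition riley_alpha (k : nat) (x y : R) : R :=
  1 + (y + 2 - x ^ 2) * Cheb_pred k y * (Cheb k y - Cheb_pred k y).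

(* Riley polynomial phi_K(x,y) of K = J(2k+1,2m), evaluated at real x, y.
   m >= 1 : S_{m-1}(lambda) alpha - S_{m-2}(lambda)
   m <= -1: S_{|m|}(lambda) - S_{|m|-1}(lambda) alpha
   (m = 0 is not a knot of the family; value 0 is an arbitrary convention.) *)
Definition riley_phi (k : nat) (m : Z) (x y : R) : R :=
  let l := riley_lambda k x y in
  let a := riley_alpha k x y in
  match m with
  | Zpos p => Cheb_pred (Pos.to_nat p) l * a - Cheb_pred (Pos.to_nat p - 1) l
  | Zneg p => Cheb (Pos.to_nat p) l - Cheb_pred (Pos.to_nat p) l * a
  | Z0 => 0
  end.

From Stdlib Require Import Reals ZArith Lra Lia.
Open Scope R_scope.

(* Write lambda, alpha for riley_lambda, riley_alpha at x = 2 cos(pi/n).  For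
   y >= 2 one has alpha(y) > 0, lambda(2) = 2 cos(2 pi/n) and lambda(y) <= x^2 - y,
   and both branches of phi are B S_N(lambda) - G S_(N-1)(lambda) with
   {B, G} = {1, alpha}.  Where lambda = -2 the value of (-1)^N times this is
   B (N+1) + G N > 0.  Where lambda takes a value z in (-2, lambda(2)] at which
   (-1)^N S_N(z) <= 0 <= (-1)^N S_(N-1)(z) it is negative; such a z is
   2 cos((N-1) pi/(N+1)), a zero of S_N, when N >= 5, and 0 or -1 for N = 2, 3, 4;
   the hypotheses on n are what put it below lambda(2).  The intermediate value
   theorem then gives a root y > 2.  For m = 2 (N = 1) the negative sign is read
   off at y = 2, using cos(2 pi/5) >= 1/4. *)

Lemma continuity_fun_id : continuity (fun y => y).
Proof. exact (derivable_continuous _ derivable_id). Qed.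

Lemma continuity_fun_const (c : R) : continuity (fun _ => c).
Proof. now apply continuity_const. Qed.

Lemma continuity_fun_plus f g :
  continuity f -> continuity g -> continuity (fun y => f y + g y).
Proof. exact (continuity_plus f g). Qed.

Lemma continuity_fun_minus f g :
  continuity f -> continuity g -> continuity (fun y => f y - g y).
Proof. exact (continuity_minus f g). Qed.

Lemma continuity_fun_mult f g :
  continuity f -> continuity g -> continuity (fun y => f y * g y).
Proof. exact (continuity_mult f g). Qed.

Lemma continuity_ext f g : (forall y, f y = g y) -> continuity f -> continuity g.
Proof.
  intros efg hf y.
  apply (continuity_pt_locally_ext f g 1 y); [lra | intros; apply efg | apply hf].
Qed.

Ltac solve_continuity :=
  repeat first [ assumption
               | apply continuity_fun_minus | apply continuity_fun_plus
               | apply continuity_fun_mult | apply continuity_fun_id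
               | apply continuity_fun_const ].

Lemma IVT_left_open f a b :
  continuity f -> a <= b -> f a <> 0 -> f a * f b <= 0 ->
  exists c, a < c <= b /\ f c = 0.
Proof.
  intros hf hab hfa hprod.
  destruct (IVT_cor f a b hf hab hprod) as [c [[hac hcb] hfc]].
  exists c; split; [split|]; auto.
  destruct hac as [hac | <-]; [exact hac | contradiction].
Qed.

Lemma neg1_pow_sq N : (-1) ^ N * (-1) ^ N = 1.
Proof. rewrite <- pow_add. replace (N + N)%nat with (2 * N)%nat by lia. apply pow_1_even. Qed.

Lemma sin_nat_PI_minus j t : sin (INR j * PI - t) = (-1) ^ S j * sin t.
Proof.
  induction j as [|j IH].
  - simpl. rewrite Rmult_0_l, Rminus_0_l, sin_neg. ring.
  - replace (INR (S j) * PI - t) with (INR j * PI - t + PI) by (rewrite S_INR; ring).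
    rewrite neg_sin, IH. simpl. ring.
Qed.

Lemma Cheb_S j z : Cheb (S j) z = z * Cheb j z - Cheb_pred j z.
Proof. unfold Cheb, Cheb_pred; simpl; destruct (cheb_pair j z); reflexivity. Qed.

Lemma Cheb_pred_S j z : Cheb_pred (S j) z = Cheb j z.
Proof. unfold Cheb, Cheb_pred; simpl; destruct (cheb_pair j z); reflexivity. Qed.

Lemma Cheb_continuous j : continuity (Cheb j) /\ continuity (Cheb_pred j).
Proof.
  induction j as [|j [hc hp]].
  - split; [exact (continuity_fun_const 1) | exact (continuity_fun_const 0)].
  - split.
    + apply (continuity_ext (fun z => z * Cheb j z - Cheb_pred j z)).
      * intro z; symmetry; apply Cheb_S.
      * solve_continuity.
    + apply (continuity_ext (Cheb j)); [intro z; symmetry; apply Cheb_pred_S | exact hc].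
Qed.

Lemma Cheb_cassini j z :
  Cheb j z ^ 2 - z * Cheb j z * Cheb_pred j z + Cheb_pred j z ^ 2 = 1.
Proof.
  induction j as [|j IH]; [unfold Cheb, Cheb_pred; simpl; ring|].
  rewrite Cheb_S, Cheb_pred_S, <- IH. ring.
Qed.

Lemma Cheb_ge_2 j z :
  2 <= z -> 0 <= Cheb_pred j z /\ Cheb_pred j z + 1 <= Cheb j z.
Proof.
  intro hz. induction j as [|j [hp hc]]; [unfold Cheb, Cheb_pred; simpl; lra|].
  rewrite Cheb_S, Cheb_pred_S.
  assert (0 <= (z - 2) * Cheb j z) by (apply Rmult_le_pos; lra).
  split; nra.
Qed.

Lemma Cheb_at_2 j : Cheb j 2 = INR j + 1 /\ Cheb_pred j 2 = INR j.
Proof.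
  induction j as [|j [hc hp]]; [unfold Cheb, Cheb_pred; simpl; lra|].
  rewrite Cheb_S, Cheb_pred_S, hc, hp, S_INR; split; ring.
Qed.

Lemma Cheb_at_m2 j :
  (-1) ^ j * Cheb j (-2) = INR j + 1 /\ (-1) ^ j * Cheb_pred j (-2) = - INR j.
Proof.
  induction j as [|j [hc hp]]; [unfold Cheb, Cheb_pred; simpl; lra|].
  rewrite Cheb_S, Cheb_pred_S, S_INR; simpl pow.
  split; [nra | lra].
Qed.

Lemma Cheb_sin j t :
  sin t * Cheb j (2 * cos t) = sin (INR (S j) * t) /\
  sin t * Cheb_pred j (2 * cos t) = sin (INR j * t).
Proof.
  induction j as [|j [hc hp]].
  - unfold Cheb, Cheb_pred; simpl. rewrite Rmult_1_l, Rmult_0_l, sin_0. split; ring.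
  - rewrite Cheb_S, Cheb_pred_S. split; [|exact hc].
    transitivity (2 * cos t * sin (INR (S j) * t) - sin (INR j * t));
      [rewrite <- hc, <- hp; ring|].
    replace (INR (S (S j)) * t) with (INR (S j) * t + t) by (rewrite (S_INR (S j)); ring).
    replace (INR j * t) with (INR (S j) * t - t) by (rewrite S_INR; ring).
    rewrite sin_plus, sin_minus. ring.
Qed.

Lemma Cheb_cos_zero N j : (1 <= j <= N)%nat ->
  Cheb N (2 * cos (INR j * PI / INR (S N))) = 0 /\
  Cheb_pred N (2 * cos (INR j * PI / INR (S N))) = (-1) ^ S j.
Proof.
  intro hj. set (t := INR j * PI / INR (S N)).
  assert (hj1 : 1 <= INR j) by (apply (le_INR 1); lia).
  assert (hjN : INR j < INR (S N)) by (apply lt_INR; lia).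
  assert (ht : t * INR (S N) = INR j * PI) by (unfold t; field; lra).
  pose proof PI_RGT_0.
  assert (hsin : 0 < sin t) by (apply sin_gt_0; nra).
  destruct (Cheb_sin N t) as [hc hp].
  split; apply (Rmult_eq_reg_l (sin t)); try lra.
  - rewrite hc, Rmult_0_r, Rmult_comm, ht.
    apply sin_eq_0_1. exists (Z.of_nat j). now rewrite <- INR_IZR_INZ.
  - rewrite hp. replace (INR N * t) with (INR j * PI - t) by (rewrite S_INR in ht; lra).
    rewrite sin_nat_PI_minus. ring.
Qed.

(* At z = -2 the pair ((-1)^N S_N(z), (-1)^N S_(N-1)(z)) is (N+1, -N); here its
   signs are (weakly) reversed. *)
Definition cheb_signs_reversed (N : nat) (z : R) : Prop :=
  (-1) ^ N * Cheb N z <= 0 <= (-1) ^ N * Cheb_pred N z.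

Lemma cheb_signs_reversed_2 : cheb_signs_reversed 2 0.
Proof. unfold cheb_signs_reversed, Cheb, Cheb_pred; simpl; lra. Qed.

Lemma cheb_signs_reversed_ge_3 N : (3 <= N)%nat ->
  exists z, -2 < z <= -1 /\ cheb_signs_reversed N z.
Proof.
  intro hN. unfold cheb_signs_reversed.
  destruct (Nat.lt_ge_cases N 5) as [hN5 | hN5].
  - exists (-1). split; [lra|].
    assert (N = 3 \/ N = 4)%nat as [-> | ->] by lia;
      unfold Cheb, Cheb_pred; simpl; lra.
  - set (t := INR (N - 1) * PI / INR (S N)).
    destruct (Cheb_cos_zero N (N - 1) ltac:(lia)) as [hc hp]; fold t in hc, hp.
    exists (2 * cos t).
    replace (S (N - 1)) with N in hp by lia.
    rewrite hc, hp, neg1_pow_sq.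
    assert (hN' : 5 <= INR N) by (replace 5 with (INR 5) by (simpl; lra); apply le_INR; lia).
    assert (ht : t * (INR N + 1) = (INR N - 1) * PI).
    { unfold t. rewrite (S_INR N), minus_INR by lia. change (INR 1) with 1. field. lra. }
    pose proof PI_RGT_0.
    assert (hcos : cos PI < cos t) by (apply cos_decreasing_1; nra).
    assert (cos t <= cos (2 * (PI / 3))) by (apply cos_decr_1; nra).
    rewrite cos_PI in hcos. rewrite cos_2PI3 in *. lra.
Qed.

Definition cheb_comb (N : nat) (L B G : R -> R) (y : R) : R :=
  B y * Cheb N (L y) - G y * Cheb_pred N (L y).

Section SignChange.

Variables (N : nat) (L B G : R -> R).
Hypotheses (hL : continuity L) (hB : continuity B) (hG : continuity G).
Hypotheses (hBpos : forall y, 2 <= y -> 0 < B y) (hGpos : forall y, 2 <= y -> 0 < G y).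

Lemma cheb_comb_continuous : continuity (cheb_comb N L B G).
Proof.
  destruct (Cheb_continuous N) as [hc hp].
  unfold cheb_comb.
  apply continuity_fun_minus; apply continuity_fun_mult;
    [exact hB | exact (continuity_comp L (Cheb N) hL hc)
    | exact hG | exact (continuity_comp L (Cheb_pred N) hL hp)].
Qed.

Lemma cheb_comb_sign_at_m2 y :
  2 <= y -> L y = -2 -> 0 < (-1) ^ N * cheb_comb N L B G y.
Proof.
  intros hy hLy. destruct (Cheb_at_m2 N) as [hc hp].
  pose proof (pos_INR N). specialize (hBpos y hy). specialize (hGpos y hy).
  unfold cheb_comb. rewrite hLy.
  replace ((-1) ^ N * (B y * Cheb N (-2) - G y * Cheb_pred N (-2)))
    with (B y * ((-1) ^ N * Cheb N (-2)) - G y * ((-1) ^ N * Cheb_pred N (-2))) by ring.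
  rewrite hc, hp. nra.
Qed.

Lemma cheb_comb_sign_reversed y :
  2 <= y -> cheb_signs_reversed N (L y) -> (-1) ^ N * cheb_comb N L B G y < 0.
Proof.
  intros hy [ha hb]. specialize (hBpos y hy). specialize (hGpos y hy).
  set (a := (-1) ^ N * Cheb N (L y)) in *.
  set (b := (-1) ^ N * Cheb_pred N (L y)) in *.
  (* Cassini's identity forbids a = b = 0. *)
  assert (hab : a ^ 2 - L y * a * b + b ^ 2 = 1).
  { rewrite <- (Cheb_cassini N (L y)), <- (Rmult_1_l (Cheb N _ ^ 2 - _ + _)),
      <- (neg1_pow_sq N).
    unfold a, b. ring. }
  replace ((-1) ^ N * cheb_comb N L B G y) with (B y * a - G y * b)
    by (unfold cheb_comb, a, b; ring).
  clearbody a b. destruct ha as [ha | ha]; [nra|].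
  subst a. assert (b = 1) as -> by nra. lra.
Qed.

Lemma cheb_comb_root_of_neg y0 y1 :
  2 <= y0 <= y1 -> L y1 <= -2 < L y0 -> (-1) ^ N * cheb_comb N L B G y0 < 0 ->
  exists y, 2 < y /\ cheb_comb N L B G y = 0.
Proof.
  intros hy hLy hneg.
  destruct (IVT_left_open (fun y => L y + 2) y0 y1) as [ya [hya hLya]];
    [solve_continuity | lra | lra | nra |].
  assert (hpos : 0 < (-1) ^ N * cheb_comb N L B G ya)
    by (apply cheb_comb_sign_at_m2; lra).
  destruct (IVT_left_open (cheb_comb N L B G) y0 ya) as [y [hy' hroot]];
    [apply cheb_comb_continuous | lra | intro h; rewrite h in hneg; lra | |].
  - rewrite <- (Rmult_1_l (_ * _)), <- (neg1_pow_sq N). nra.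
  - exists y; split; [lra | exact hroot].
Qed.

Lemma cheb_comb_root_of_reversed y1 z :
  2 <= y1 -> L y1 <= -2 < z -> z <= L 2 -> cheb_signs_reversed N z ->
  exists y, 2 < y /\ cheb_comb N L B G y = 0.
Proof.
  intros hy1 hz hz2 hrev.
  destruct (IVT_cor (fun y => L y - z) 2 y1) as [y0 [hy0 hLy0]];
    [solve_continuity | lra | nra |].
  apply (cheb_comb_root_of_neg y0 y1); [lra | lra |].
  apply cheb_comb_sign_reversed; [lra|].
  now replace (L y0) with z by lra.
Qed.

End SignChange.

Section Riley.

Variables (k : nat) (x : R).
Hypothesis hx : x ^ 2 <= 4.

Lemma riley_lambda_continuous : continuity (riley_lambda k x).
Proof.
  destruct (Cheb_continuous k) as [hc hp].
  unfold riley_lambda. solve_continuity.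
Qed.

Lemma riley_alpha_continuous : continuity (riley_alpha k x).
Proof.
  destruct (Cheb_continuous k) as [hc hp].
  unfold riley_alpha. solve_continuity.
Qed.

Lemma riley_alpha_pos y : 2 <= y -> 0 < riley_alpha k x y.
Proof.
  intro hy. destruct (Cheb_ge_2 k y hy) as [hp hc].
  unfold riley_alpha.
  assert (0 <= (y + 2 - x ^ 2) * Cheb_pred k y) by (apply Rmult_le_pos; lra).
  nra.
Qed.

Lemma riley_lambda_le y : 2 <= y -> riley_lambda k x y <= x ^ 2 - y.
Proof.
  intro hy. destruct (Cheb_ge_2 k y hy) as [hp hc].
  unfold riley_lambda.
  assert (0 <= (y - 2) * (y + 2 - x ^ 2)) by (apply Rmult_le_pos; lra).
  assert (0 <= Cheb k y * Cheb_pred k y) by (apply Rmult_le_pos; lra).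
  nra.
Qed.

Lemma riley_lambda_at_2 : riley_lambda k x 2 = x ^ 2 - 2.
Proof. unfold riley_lambda. ring. Qed.

Lemma riley_alpha_at_2 : riley_alpha k x 2 = 1 + (4 - x ^ 2) * INR k.
Proof. unfold riley_alpha. destruct (Cheb_at_2 k) as [-> ->]. ring. Qed.

Lemma riley_phi_pos p y : riley_phi k (Z.pos p) x y =
  cheb_comb (Pos.to_nat p - 1) (riley_lambda k x) (riley_alpha k x) (fun _ => 1) y.
Proof.
  unfold riley_phi, cheb_comb. pose proof (Pos2Nat.is_pos p).
  replace (Pos.to_nat p) with (S (Pos.to_nat p - 1)) at 1 by lia.
  rewrite Cheb_pred_S. ring.
Qed.

Lemma riley_phi_neg p y : riley_phi k (Z.neg p) x y =
  cheb_comb (Pos.to_nat p) (riley_lambda k x) (fun _ => 1) (riley_alpha k x) y.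
Proof. unfold riley_phi, cheb_comb. ring. Qed.

Lemma riley_lambda_at_7 : riley_lambda k x 7 <= -2.
Proof. pose proof (riley_lambda_le 7 ltac:(lra)). lra. Qed.

Lemma riley_phi_pos_root p z :
  -2 < z <= x ^ 2 - 2 -> cheb_signs_reversed (Pos.to_nat p - 1) z ->
  exists y, 2 < y /\ riley_phi k (Z.pos p) x y = 0.
Proof.
  intros hz hrev.
  destruct (cheb_comb_root_of_reversed (Pos.to_nat p - 1) _ _ _
              riley_lambda_continuous riley_alpha_continuous (continuity_fun_const 1)
              riley_alpha_pos (fun _ _ => Rlt_0_1) 7 z)
    as [y [hy hroot]];
    [lra | pose proof riley_lambda_at_7; lra | rewrite riley_lambda_at_2; lra | exact hrev |].
  exists y. now rewrite riley_phi_pos.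
Qed.

Lemma riley_phi_neg_root p z :
  -2 < z <= x ^ 2 - 2 -> cheb_signs_reversed (Pos.to_nat p) z ->
  exists y, 2 < y /\ riley_phi k (Z.neg p) x y = 0.
Proof.
  intros hz hrev.
  destruct (cheb_comb_root_of_reversed (Pos.to_nat p) _ _ _
              riley_lambda_continuous (continuity_fun_const 1) riley_alpha_continuous
              (fun _ _ => Rlt_0_1) riley_alpha_pos 7 z)
    as [y [hy hroot]];
    [lra | pose proof riley_lambda_at_7; lra | rewrite riley_lambda_at_2; lra | exact hrev |].
  exists y. now rewrite riley_phi_neg.
Qed.

Lemma riley_phi_2_root : (1 <= k)%nat -> 1/2 <= x ^ 2 - 2 ->
  exists y, 2 < y /\ riley_phi k 2 x y = 0.
Proof.
  intros hk hl.
  destruct (cheb_comb_root_of_neg 1 _ _ _ riley_lambda_continuous riley_alpha_continuous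
              (continuity_fun_const 1) riley_alpha_pos (fun _ _ => Rlt_0_1) 2 7)
    as [y [hy hroot]];
    [lra | rewrite riley_lambda_at_2; pose proof riley_lambda_at_7; lra | |
     exists y; now rewrite riley_phi_pos].
  (* alpha(2) lambda(2) > 1, since alpha(2) >= 3 - lambda(2) and lambda(2) >= 1/2 *)
  unfold cheb_comb, Cheb, Cheb_pred; simpl.
  rewrite riley_alpha_at_2, riley_lambda_at_2.
  assert (hk1 : 1 <= INR k) by (apply (le_INR 1); lia).
  assert (0 <= (4 - x ^ 2) * (INR k - 1)) by (apply Rmult_le_pos; lra).
  nra.
Qed.

End Riley.

Lemma cos_2PI_div_le d n : (2 <= d <= n)%nat ->
  cos (2 * PI / INR d) <= cos (2 * PI / INR n).
Proof.
  intro hdn. pose proof PI_RGT_0.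
  assert (h2d : 2 <= INR d) by (replace 2 with (INR 2) by (simpl; lra); apply le_INR; lia).
  assert (hdn' : INR d <= INR n) by (apply le_INR; lia).
  assert (/ INR n <= / INR d) by (apply Rinv_le_contravar; lra).
  assert (/ INR d <= / 2) by (apply Rinv_le_contravar; lra).
  assert (0 < / INR n) by (apply Rinv_0_lt_compat; lra).
  apply cos_decr_1; unfold Rdiv; nra.
Qed.

Lemma cos_2PI_3 : cos (2 * PI / INR 3) = -1/2.
Proof.
  rewrite <- cos_2PI3. f_equal. simpl INR. field.
Qed.

Lemma cos_2PI_4 : cos (2 * PI / INR 4) = 0.
Proof.
  rewrite <- cos_PI2. f_equal. simpl INR. field.
Qed.

Lemma cos_2PI_5_ge : 1/4 <= cos (2 * PI / INR 5).
Proof.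
  replace (2 * PI / INR 5) with (PI / 2 - PI / 10) by (simpl INR; field).
  rewrite cos_shift.
  pose proof PI2_3_2. pose proof PI_4.
  set (a := PI / 10).
  assert (ha : 3/10 <= a <= 2/5) by (unfold a; lra).
  destruct (SIN a) as [hlb _]; [lra | unfold a; lra |].
  unfold sin_lb, sin_approx, sin_term in hlb. simpl in hlb.
  assert (a ^ 3 <= (2/5) ^ 3) by (apply pow_incr; lra).
  assert (a ^ 7 <= 1) by (rewrite <- (pow1 7); apply pow_incr; lra).
  assert (0 <= a ^ 5) by (apply pow_le; lra).
  simpl pow in *. nra.
Qed.

Theorem theorem5p5 (n k : nat) (m : Z)
  (hn : (2 <= n)%nat) (hk : (1 <= k)%nat) (hm : (2 <= Z.abs m)%Z)
  (hcase : ((m <= -3)%Z /\ (3 <= n)%nat) \/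
           (m = (-2)%Z /\ (4 <= n)%nat) \/
           (m = 2%Z /\ (5 <= n)%nat) \/
           (m = 3%Z /\ (4 <= n)%nat) \/
           ((4 <= m)%Z /\ (3 <= n)%nat)) :
  exists y : R, 2 < y /\ riley_phi k m (2 * cos (PI / INR n)) y = 0.
Proof.
  set (x := 2 * cos (PI / INR n)).
  assert (hx : x ^ 2 <= 4) by (unfold x; pose proof (COS_bound (PI / INR n)); nra).
  assert (hl : x ^ 2 - 2 = 2 * cos (2 * PI / INR n)).
  { unfold x. replace (2 * PI / INR n) with (2 * (PI / INR n))
      by (field; apply not_0_INR; lia).
    rewrite cos_2a_cos. ring. }
  assert (hcos : forall d, (2 <= d <= n)%nat -> 2 * cos (2 * PI / INR d) <= x ^ 2 - 2)
    by (intros d hd; rewrite hl; pose proof (cos_2PI_div_le d n hd); lra).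
  destruct hcase as [[hm' hn'] | [[-> hn'] | [[-> hn'] | [[-> hn'] | [hm' hn']]]]].
  - destruct m as [| p | p]; try lia.
    destruct (cheb_signs_reversed_ge_3 (Pos.to_nat p)) as [z [hz hrev]]; [lia|].
    apply (riley_phi_neg_root k x hx p z); [| exact hrev].
    pose proof (hcos 3%nat ltac:(lia)). rewrite cos_2PI_3 in *. lra.
  - apply (riley_phi_neg_root k x hx 2 0); [| exact cheb_signs_reversed_2].
    pose proof (hcos 4%nat ltac:(lia)). rewrite cos_2PI_4 in *. lra.
  - apply riley_phi_2_root; [exact hx | exact hk |].
    pose proof (hcos 5%nat ltac:(lia)). pose proof cos_2PI_5_ge. lra.
  - apply (riley_phi_pos_root k x hx 3 0); [| exact cheb_signs_reversed_2].
    pose proof (hcos 4%nat ltac:(lia)). rewrite cos_2PI_4 in *. lra.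
  - destruct m as [| p | p]; try lia.
    destruct (cheb_signs_reversed_ge_3 (Pos.to_nat p - 1)) as [z [hz hrev]]; [lia|].
    apply (riley_phi_pos_root k x hx p z); [| exact hrev].
    pose proof (hcos 3%nat ltac:(lia)). rewrite cos_2PI_3 in *. lra.
Qed.
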